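(* There exists an absolute constant $C>0$ such that the following holds. Let $\mathcal D$ be a distribution on $[0,1]\times\{0,1\}$, $m$ a positive integer, and $i\in\{0,\ldots,m\}$. For every $\alpha>0$, $$\sum_{j<i}\mathbb I\big[q_j>i/m-\alpha/\sqrt{\pi_j}\big]\sqrt{\pi_j}\le 3+C\log m\,\big(\alpha m+\sqrt{m\cdot\mathsf{SCDL}_m(\mathcal D)}\big),$$ where the sum is over $j\in\{0,\ldots,i-1\}$.
   Context: For $x\in\mathbb R$ write $x_+=\max\{x,0\}$. For $j\in\{0,\ldots,m\}$ let $w_j(p)=(1-|mp-j|)_+$, $\pi_j=\mathbb E_{(p,y)\sim\mathcal D}[w_j(p)]$ and $q_j=\mathbb E_{(p,y)\sim\mathcal D}[w_j(p)y]/\pi_j$; terms with $\pi_j=0$ contribute $0$. Define $$\mathsf{SCDL}_m(\mathcal D)=\max_{k=0,\ldots,m}\Big(\sum_{j=0}^{k}\pi_j\big(q_j-\tfrac{k+1}{m}\big)_+ +\sum_{j=k+1}^{m}\pi_j\big(\tfrac km-q_j\big)_+\Big).$$ *)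

From HB Require Import structures.
From mathcomp Require Import all_boot all_order all_algebra.
From mathcomp Require Import all_classical all_reals all_analysis.
From mathcomp Require Import Rstruct Rstruct_topology.
Set Implicit Arguments. Unset Strict Implicit. Unset Printing Implicit Defensive.
Import Order.TTheory GRing.Theory Num.Theory.
Local Open Scope classical_set_scope.
Local Open Scope ring_scope.

Notation RR := Rdefinitions.R.
Notation Omega := (measurableTypeR RR * bool)%type.

(* a distribution D on [0,1] x {0,1}: a probability measure on R * bool
   whose first marginal is concentrated on [0,1]; y : bool is read as 0/1. *)
Definition supported01 (P : probability Omega RR) : Prop :=
  P (`[(0:RR), 1] `*` setT) = 1%E.

Definition ind (b : bool) : RR := if b then 1 else 0.

Definition posp (x : RR) : RR := Num.max x 0.

Definition wj (m j : nat) (p : RR) : RR := posp (1 - `|m%:R * p - j%:R|).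

Definition piD (P : probability Omega RR) (m j : nat) : RR :=
  Rintegral P setT (fun x => wj m j (x.1 : RR)).

(* q_j = E[w_j(p) y] / pi_j  (division by 0 gives 0) *)
Definition qD (P : probability Omega RR) (m j : nat) : RR :=
  Rintegral P setT (fun x => wj m j (x.1 : RR) * (x.2)%:R) / piD P m j.

Definition SCDL (P : probability Omega RR) (m : nat) : RR :=
  \big[Num.max/0]_(k < m.+1)
    (\sum_(j < k.+1) piD P m j * posp (qD P m j - k.+1%:R / m%:R)
     + \sum_(k.+1 <= j < m.+1) piD P m j * posp (k%:R / m%:R - qD P m j)).

From HB Require Import structures.
From mathcomp Require Import all_boot all_order all_algebra.
From mathcomp Require Import all_classical all_reals all_analysis.
From mathcomp Require Import Rstruct Rstruct_topology.
From mathcomp Require Import ring lra zify.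
From mathcomp Require Import measurable_realfun.
Set Implicit Arguments. Unset Strict Implicit. Unset Printing Implicit Defensive.
Import Order.TTheory GRing.Theory Num.Theory.
Local Open Scope classical_set_scope.
Local Open Scope ring_scope.

(* Write f_j for the j-th summand and B = alpha m + sqrt (m SCDL). Take a block
   [lo, i - h) of at most h indices. Each flagged j in it has
   q_j - (i - h)/m > h/m - alpha/sqrt pi_j, so the term k = i - h - 1 of SCDL
   gives (h/m) sum f_j^2 - alpha sum f_j <= SCDL; together with Cauchy-Schwarz
   (sum f_j)^2 <= h sum f_j^2 this yields sum f_j <= B. The indices below i - 1
   are covered by ceil (log2 m) blocks of halving lengths, and f_(i-1) <= 1. *)

Lemma sqr_sum_le_size_sum_sqr (R : realDomainType) (I : Type) (s : seq I) (x : I -> R) :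
  (\sum_(j <- s) x j) ^+ 2 <= (size s)%:R * \sum_(j <- s) x j ^+ 2.
Proof.
have sum_const (c : R) : \sum_(j <- s) c = (size s)%:R * c.
  by rewrite big_const_seq count_predT iter_addr_0 mulr_natl.
have : 0 <= \sum_(j <- s) \sum_(k <- s) (x j - x k) ^+ 2.
  by apply: sumr_ge0 => j _; apply: sumr_ge0 => k _; exact: sqr_ge0.
under eq_bigr do under eq_bigr do rewrite sqrrB.
under eq_bigr do rewrite !big_split /= sumrN sum_const sumrMnl -mulr_sumr.
rewrite !big_split /= sumrN sum_const sumrMnl -mulr_suml -expr2 -mulr_sumr.
lra.
Qed.

Lemma le_add_sqrt_of_sqr_le (R : rcfType) (a b c : R) :
  0 <= a -> 0 <= b -> a ^+ 2 <= b * a + c -> a <= b + Num.sqrt c.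
Proof.
move=> a_ge0 b_ge0 sqr_le; rewrite leNgt; apply/negP => gt_a.
have [c_lt0|c_ge0] := ltrP c 0.
  by rewrite ltr0_sqrtr // addr0 in gt_a; nra.
have := sqr_sqrtr c_ge0; have := sqrtr_ge0 c.
set r := Num.sqrt c in gt_a *; nra.
Qed.

Lemma sum_le_dyadic (R : numDomainType) (g : nat -> R) (i : nat) (B : R) :
  0 <= B ->
  (forall lo h, (lo + h < i <= lo + h.*2)%N -> \sum_(lo <= j < i - h) g j <= B) ->
  forall n lo, (i <= lo + 2 ^ n)%N -> \sum_(lo <= j < i.-1) g j <= n%:R * B.
Proof.
move=> B_ge0 block; elim=> [|n IHn] lo hi.
  by rewrite big_geq ?mul0r //; rewrite expn0 in hi; lia.
have nB_le : n%:R * B <= n.+1%:R * B by rewrite ler_wpM2r // ler_nat.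
have [short|long] := leqP i (lo + 2 ^ n); first exact: le_trans (IHn lo short) nB_le.
have pow_gt0 : (0 < 2 ^ n)%N by rewrite expn_gt0.
rewrite (big_cat_nat (n := i - 2 ^ n)) /=; try lia.
rewrite -natr1 mulrDl mul1r addrC; apply: lerD.
- by apply: IHn; lia.
- by apply: block; rewrite -mul2n -expnS; lia.
Qed.

Lemma half_le_ln2 (R : realType) : 2^-1 <= ln (2 : R).
Proof.
have := @le_ln1Dx R (- 2^-1) ltac:(lra).
have -> : 1 - 2^-1 = 2^-1 :> R by field.
by rewrite lnV ?posrE //; lra.
Qed.

Lemma up_log2_le_ln (R : realType) m : (0 < m)%N -> (up_log 2 m)%:R <= 4 * ln (m%:R : R).
Proof.
move=> m_gt0; have [m_le1|m_gt1] := leqP m 1.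
  have -> : m = 1%N by lia.
  by rewrite up_log1 ln1 mulr0.
have /andP[pow_lt _] := up_log_bounds (isT : (1 < 2)%N) m_gt1.
set n := up_log 2 m in pow_lt *.
have n_gt0 : (0 < n)%N by rewrite up_log_gt0.
have ln_pow_lt : ln 2 *+ n.-1 < ln (m%:R : R).
  by rewrite -lnXn // -natrX ltr_ln ?posrE ?ltr0n ?expn_gt0 // ltr_nat.
have ln2_le : ln 2 <= ln (m%:R : R) by rewrite ler_ln ?posrE ?ltr0n ?ler_nat //; lia.
have half_le := half_le_ln2 R.
have k_ge0 : 0 <= n.-1%:R :> R by rewrite ler0n.
rewrite -[ln 2 *+ _]mulr_natr in ln_pow_lt.
rewrite -(prednK n_gt0) -[n.-1.+1%:R]natr1.
nra.
Qed.

Lemma posp_ge0 x : 0 <= posp x.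
Proof. by rewrite /posp le_max lexx orbT. Qed.

Lemma posp_ge x : x <= posp x.
Proof. by rewrite /posp le_max lexx. Qed.

Section MassBound.
Variables (m i : nat) (pi q : nat -> RR) (alpha S : RR).
Hypotheses (i_le_m : (i <= m)%N) (pi_ge0 : forall j, 0 <= pi j)
  (alpha_ge0 : 0 <= alpha)
  (prefix_le : forall k, (k < m)%N ->
     \sum_(0 <= j < k.+1) pi j * posp (q j - k.+1%:R / m%:R) <= S).

Let mass j := ind (i%:R / m%:R - alpha / Num.sqrt (pi j) < q j) * Num.sqrt (pi j).
Let B := alpha * m%:R + Num.sqrt (m%:R * S).

Lemma bound_ge0 : 0 <= B.
Proof. by rewrite addr_ge0 ?sqrtr_ge0 // mulr_ge0. Qed.

Lemma mass_ge0 j : 0 <= mass j.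
Proof. by rewrite /mass /ind; case: ifP; rewrite ?mul1r ?mul0r ?sqrtr_ge0. Qed.

Lemma mass_le1 j : pi j <= 1 -> mass j <= 1.
Proof.
by move=> pi_le1; rewrite /mass /ind; case: ifP; rewrite ?mul0r ?mul1r // -sqrtr1 ler_sqrt.
Qed.

Lemma mass_sqr_sub_le j t :
  (i%:R / m%:R - t) * mass j ^+ 2 - alpha * mass j <= pi j * posp (q j - t).
Proof.
have rhs_ge0 : 0 <= pi j * posp (q j - t) by rewrite mulr_ge0 ?posp_ge0.
rewrite /mass /ind; case: ifP => [q_gt|_]; last by rewrite !mul0r expr0n /= !mulr0 subr0.
rewrite !mul1r sqr_sqrtr //.
have [->|pi_neq0] := eqVneq (pi j) 0; first by rewrite sqrtr0 !(mulr0, mul0r) subr0.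
have sqrt_gt0 : 0 < Num.sqrt (pi j) by rewrite sqrtr_gt0 lt_neqAle eq_sym pi_neq0 pi_ge0.
have sqrt_div : pi j / Num.sqrt (pi j) = Num.sqrt (pi j).
  by rewrite -{1}(sqr_sqrtr (pi_ge0 j)) expr2 mulfK // gt_eqF.
have := ler_wpM2l (pi_ge0 j) (ltW q_gt).
rewrite mulrBr [pi j * (alpha / _)]mulrCA sqrt_div => le_pi_q.
apply: le_trans (ler_wpM2l (pi_ge0 j) (posp_ge (q j - t))).
nra.
Qed.

Lemma sum_mass_block_le lo h :
  (lo + h < i <= lo + h.*2)%N -> \sum_(lo <= j < i - h) mass j <= B.
Proof.
move=> block.
have m_gt0 : 0 < m%:R :> RR by rewrite ltr0n; lia.
have k_lt_m : ((i - h).-1 < m)%N by lia.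
have k_succ : (i - h).-1.+1 = (i - h)%N by lia.
set A := \sum_(lo <= j < i - h) mass j.
set Q := \sum_(lo <= j < i - h) mass j ^+ 2.
have Q_ge0 : 0 <= Q by rewrite sumr_ge0 // => j _; rewrite sqr_ge0.
have shift_le : h%:R / m%:R * Q - alpha * A <= S.
  apply: le_trans _ (prefix_le k_lt_m); rewrite k_succ.
  rewrite mulr_sumr mulr_sumr -sumrB [leRHS](big_cat_nat (n := lo)) //=; last lia.
  apply: ler_wpDl; first by rewrite sumr_ge0 // => j _; rewrite mulr_ge0 ?posp_ge0.
  apply: ler_sum => j _; apply: le_trans _ (mass_sqr_sub_le j _).
  by rewrite natrB; [rewrite -mulrBl opprB subrKC | lia].
have cauchy_schwarz : A ^+ 2 <= h%:R * Q.
  apply: le_trans (sqr_sum_le_size_sum_sqr _ _) _.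
  by rewrite size_iota ler_wpM2r // ler_nat; lia.
apply: le_add_sqrt_of_sqr_le; first by rewrite sumr_ge0 // => j _; apply: mass_ge0.
  by rewrite mulr_ge0 // ler0n.
have : h%:R * Q <= m%:R * (S + alpha * A).
  by rewrite -ler_pdivrMl //; lra.
lra.
Qed.

Lemma sum_mass_le n :
  (m <= 2 ^ n)%N -> (forall j, pi j <= 1) -> \sum_(j < i) mass j <= 1 + n%:R * B.
Proof.
move=> m_le_pow pi_le1.
have [->|i_gt0] := posnP i; first by rewrite big_ord0 addr_ge0 // mulr_ge0 ?bound_ge0.
rewrite -(big_mkord xpredT) -(prednK i_gt0) big_nat_recr //= addrC lerD ?mass_le1 //.
apply: (sum_le_dyadic bound_ge0 sum_mass_block_le); lia.
Qed.
End MassBound.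

Lemma wj_ge0 m j p : 0 <= wj m j p.
Proof. exact: posp_ge0. Qed.

Lemma wj_le1 m j p : wj m j p <= 1.
Proof. by rewrite /wj /posp ge_max ler01 andbT lerBlDr lerDl normr_ge0. Qed.

Lemma measurable_wj m j :
  measurable_fun [set: (RR : realType)] (wj m j : (RR : realType) -> (RR : realType)).
Proof.
apply: measurable_maxr => //; apply: measurable_funB => //.
apply: (measurableT_comp (@normr_measurable (RR : realType) _)) => //.
exact: measurable_funB.
Qed.

Lemma measurable_wj_fst m j :
  measurable_fun [set: Omega] (fun x => (wj m j x.1)%:E).
Proof. exact/measurable_EFinP/(measurableT_comp (measurable_wj m j)). Qed.

Lemma piD_ge0 P m j : 0 <= piD P m j.
Proof. by apply: Rintegral_ge0 => x _; apply: wj_ge0. Qed.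

Lemma piD_le1 P m j : piD P m j <= 1.
Proof.
have int_ge0 : (0 <= \int[P]_x (wj m j x.1)%:E)%E.
  by apply: integral_ge0 => x _; rewrite lee_fin wj_ge0.
have int_le1 : (\int[P]_x (wj m j x.1)%:E <= 1)%E.
  rewrite -(probability_setT P) -[X in (_ <= X)%E]mul1e -integral_cst //.
  apply: ge0_le_integral => //.
  - by move=> x _; rewrite lee_fin wj_ge0.
  - exact: measurable_wj_fst.
  - by move=> x _; rewrite lee_fin wj_le1.
rewrite /piD /Rintegral; move: int_ge0 int_le1.
by case: (\int[P]_x (wj m j x.1)%:E)%E => //= r; rewrite !lee_fin.
Qed.

Lemma prefix_le_SCDL P m k : (k < m)%N ->
  \sum_(0 <= j < k.+1) piD P m j * posp (qD P m j - k.+1%:R / m%:R) <= SCDL P m.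
Proof.
move=> k_lt_m; rewrite big_mkord.
apply: le_trans (le_bigmax _ _ (Ordinal (leqW k_lt_m))); rewrite lerDl.
by rewrite sumr_ge0 // => j _; rewrite mulr_ge0 ?piD_ge0 ?posp_ge0.
Qed.

Theorem lemma7p3 :
  exists C : RR, 0 < C /\
  forall (P : probability Omega RR) (m i : nat),
    supported01 P -> (0 < m)%N -> (i <= m)%N ->
    forall alpha : RR, 0 < alpha ->
      \sum_(j < i)
         ind (i%:R / m%:R - alpha / Num.sqrt (piD P m j) < qD P m j)
         * Num.sqrt (piD P m j)
      <= 3 + C * ln m%:R * (alpha * m%:R + Num.sqrt (m%:R * SCDL P m)).
Proof.
exists 4; split; first lra.
move=> P m i _ m_gt0 i_le_m alpha alpha_gt0.
have sum_le := sum_mass_le i_le_m (@piD_ge0 P m) (ltW alpha_gt0)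
  (@prefix_le_SCDL P m) (up_logP m (isT : (1 < 2)%N)) (@piD_le1 P m).
set B := alpha * m%:R + Num.sqrt (m%:R * SCDL P m) in sum_le *.
have B_ge0 : 0 <= B by apply: bound_ge0; exact: ltW.
have := ler_wpM2r B_ge0 (up_log2_le_ln RR m_gt0).
lra.
Qed.
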